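(* Let $(\mathfrak g,D)$ be a difference Lie algebra. Set $C^1(\mathfrak g,D)=\mathrm{Hom}(\mathfrak g,\mathfrak g)$ and $C^n(\mathfrak g,D)=\mathrm{Hom}(\wedge^n\mathfrak g,\mathfrak g)\oplus\mathrm{Hom}(\wedge^{n-1}\mathfrak g,\mathfrak g)$ for $n\ge2$, and define $\bar\delta:C^n(\mathfrak g,D)\to C^{n+1}(\mathfrak g,D)$ by $\bar\delta(f,\theta)=(d^{CE}_{\mathrm{ad}}f,\ d^{CE}_{\mathrm{ad}_D}\theta+T(f))$ (for $n=1$, $\bar\delta(f)=(d^{CE}_{\mathrm{ad}}f,T(f))$). Then $\bar\delta\circ\bar\delta=0$.
   Context: A difference Lie algebra $(\mathfrak g,D)$ is a Lie algebra $\mathfrak g$ with a linear map $D:\mathfrak g\to\mathfrak g$ such that $D[x,y]=[x,D(y)]-[y,D(x)]+[D(x),D(y)]$ for all $x,y$. $d^{CE}_{\mathrm{ad}}$ is the Chevalley–Eilenberg differential of $\mathfrak g$ with coefficients in the adjoint representation, and $d^{CE}_{\mathrm{ad}_D}$ the one with coefficients in the representation $\mathrm{ad}_D(x)u=[x,u]+[D(x),u]$. For $f\in\mathrm{Hom}(\wedge^n\mathfrak g,\mathfrak g)$, $T(f)\in\mathrm{Hom}(\wedge^n\mathfrak g,\mathfrak g)$ is $T(f)(x_1,\dots,x_n)=(-1)^n\big(\sum_{k=1}^n\sum_{1\le i_1<\cdots<i_k\le n}f(y_1,\dots,y_n)-D(f(x_1,\dots,x_n))\big)$, where $y_j=D(x_j)$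 if $j\in\{i_1,\dots,i_k\}$ and $y_j=x_j$ otherwise. *)

From HB Require Import structures.
From mathcomp Require Import all_boot all_order all_algebra.
Set Implicit Arguments. Unset Strict Implicit. Unset Printing Implicit Defensive.
Import GRing.Theory.
Local Open Scope ring_scope.

Section DiffLie.
Variables (K : fieldType) (g : lmodType K).

Definition is_lie_bracket (br : g -> g -> g) : Prop :=
  [/\ (forall a x y z, br (a *: x + y) z = a *: br x z + br y z),
      (forall a x y z, br z (a *: x + y) = a *: br z x + br z y),
      (forall x, br x x = 0) &
      (forall x y z, br x (br y z) + br y (br z x) + br z (br x y) = 0)].

Definition is_linear_map (D : g -> g) : Prop :=
  forall a x y, D (a *: x + y) = a *: D x + D y.

Definition is_difference_lie (br : g -> g -> g) (D : g -> g) : Prop :=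
  [/\ is_lie_bracket br, is_linear_map D &
      forall x y, D (br x y) = br x (D y) - br y (D x) + br (D x) (D y)].

(* n-cochains: maps on lists of arguments, only meaningful on lists of size n. *)
Definition cochain := seq g -> g.

Definition is_alt_multilinear (n : nat) (f : cochain) : Prop :=
  (forall (s t : seq g) (a : K) (x y : g), (size s + size t).+1 = n ->
     f (s ++ (a *: x + y) :: t) = a *: f (s ++ x :: t) + f (s ++ y :: t)) /\
  (forall (s t u : seq g) (x : g), (size s + size t + size u).+2 = n ->
     f (s ++ x :: t ++ x :: u) = 0).

Definition cadd (f h : cochain) : cochain := fun s => f s + h s.

Definition dropi (i : nat) (s : seq g) : seq g := take i s ++ drop i.+1 s.

Definition dCE (br : g -> g -> g) (rho : g -> g -> g) (f : cochain) : cochain :=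
  fun s =>
    \sum_(i < size s) (-1) ^+ i *: rho (nth 0 s i) (f (dropi i s)) +
    \sum_(j < size s) \sum_(i < j)
       (-1) ^+ (i + j) *: f (br (nth 0 s i) (nth 0 s j) :: dropi i (dropi j s)).

Definition ad (br : g -> g -> g) : g -> g -> g := fun x u => br x u.
Definition adD (br : g -> g -> g) (D : g -> g) : g -> g -> g :=
  fun x u => br x u + br (D x) u.

Definition Top (D : g -> g) (n : nat) (f : cochain) : cochain :=
  fun s => (-1) ^+ n *:
    (\sum_(S : {set 'I_n} | S != set0)
        f [seq (if i \in S then D (nth 0 s i) else nth 0 s i) | i <- enum 'I_n]
     - D (f s)).

Definition dbar (br : g -> g -> g) (D : g -> g) (n : nat)
    (p : cochain * cochain) : cochain * cochain :=
  (dCE br (ad br) p.1, cadd (dCE br (adD br D) p.2) (Top D n p.1)).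

Definition dbar1 (br : g -> g -> g) (D : g -> g) (f : cochain) : cochain * cochain :=
  (dCE br (ad br) f, Top D 1 f).

End DiffLie.

From mathcomp Require Import all_boot all_algebra zify.
Set Implicit Arguments. Unset Strict Implicit. Unset Printing Implicit Defensive.
Import GRing.Theory.
Local Open Scope ring_scope.

(* The first component of [dbar (dbar (f, theta))] is [d_ad (d_ad f)], and the
   second is [d_adD (d_adD theta)] plus [d_adD (T f) + T (d_ad f)].  The two
   squares vanish because [d o d = 0] for any representation, which comes down to
   reindexing identities for iterated alternating sums over removed arguments.
   For the mixed term, the difference Lie algebra axiom says exactly that
   [id + D] is a Lie algebra morphism, and [ad_D x = ad (x + D x)].  Expanding
   the sum over subsets by multiadditivity gives
   [T f = (-1)^n (f o (id + D) - (id + D) o f)], and conjugation by [id + D]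
   carries [d_ad] to [d_adD] on both terms, with opposite signs. *)

Section LinearMaps.
Variables (K : fieldType) (g : lmodType K) (h : g -> g).
Hypothesis h_lin : is_linear_map h.

Lemma linear_mapD : {morph h : x y / x + y}.
Proof. by move=> x y; have := h_lin 1 x y; rewrite !scale1r. Qed.

Lemma linear_map0 : h 0 = 0.
Proof. by apply: (addrI (h 0)); rewrite -linear_mapD !addr0. Qed.

Lemma linear_mapZ c x : h (c *: x) = c *: h x.
Proof. by rewrite -[c *: x]addr0 h_lin linear_map0 addr0. Qed.

Lemma linear_mapN x : h (- x) = - h x.
Proof. by rewrite -scaleN1r linear_mapZ scaleN1r. Qed.

Lemma linear_map_sum I (r : seq I) (P : pred I) (F : I -> g) :
  h (\sum_(i <- r | P i) F i) = \sum_(i <- r | P i) h (F i).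
Proof. exact: (big_morph h linear_mapD linear_map0). Qed.

End LinearMaps.

Lemma scale_linear_map (K : fieldType) (g : lmodType K) (c : K) :
  is_linear_map (fun x : g => c *: x).
Proof. by move=> a x y; rewrite scalerDr !scalerA mulrC. Qed.

Section AlternatingSums.
Variables (K : fieldType) (g : lmodType K).
Implicit Types (s t r : seq g).

Definition altsum1 s (F : g -> seq g -> g) : g :=
  \sum_(i < size s) (-1) ^+ i *: F (nth 0 s i) (dropi i s).

Definition altsum2 s (F : g -> g -> seq g -> g) : g :=
  \sum_(j < size s) \sum_(i < j)
    (-1) ^+ (i + j) *: F (nth 0 s i) (nth 0 s j) (dropi i (dropi j s)).

Lemma dropi0 x t : dropi 0 (x :: t) = t.
Proof. by rewrite /dropi /= drop0. Qed.

Lemma dropiS x t i : dropi i.+1 (x :: t) = x :: dropi i t.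
Proof. by []. Qed.

Lemma size_dropi i s : (i < size s)%N -> size (dropi i s) = (size s).-1.
Proof. by move=> lt_is; rewrite /dropi size_cat size_take size_drop lt_is; lia. Qed.

Lemma dropi_map (h : g -> g) i s : dropi i (map h s) = map h (dropi i s).
Proof. by rewrite /dropi map_cat map_take map_drop. Qed.

Lemma altsum1_nil F : altsum1 [::] F = 0.
Proof. by rewrite /altsum1 big_ord0. Qed.

Lemma altsum2_nil F : altsum2 [::] F = 0.
Proof. by rewrite /altsum2 big_ord0. Qed.

Lemma altsum1_cons x t F :
  altsum1 (x :: t) F = F x t - altsum1 t (fun a r => F a (x :: r)).
Proof.
rewrite /altsum1 /= big_ord_recl expr0 scale1r dropi0 -sumrN.
by congr (_ + _); apply: eq_bigr => i _; rewrite lift0 exprS mulN1r scaleNr.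
Qed.

Lemma altsum2_cons x t F :
  altsum2 (x :: t) F =
  - altsum1 t (F x) + altsum2 t (fun a b r => F a b (x :: r)).
Proof.
rewrite /altsum2 /altsum1 /= big_ord_recl big_ord0 add0r -sumrN -big_split /=.
apply: eq_bigr => j _; rewrite /bump leq0n add1n big_ord_recl dropiS dropi0 /=.
congr (_ + _); first by rewrite add0n exprS mulN1r scaleNr.
by apply: eq_bigr => i _; rewrite /bump leq0n add1n addSn addnS !exprS !mulN1r opprK.
Qed.

Lemma eq_altsum1 s F G :
  (forall a r, (size r).+1 = size s -> F a r = G a r) ->
  altsum1 s F = altsum1 s G.
Proof.
move=> eqFG; apply: eq_bigr => i _; have lt_i := ltn_ord i.
by rewrite eqFG // size_dropi //; lia.
Qed.

Lemma eq_altsum2 s F G :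
  (forall a b r, (size r).+2 = size s -> F a b r = G a b r) ->
  altsum2 s F = altsum2 s G.
Proof.
move=> eqFG; apply: eq_bigr => j _; apply: eq_bigr => i _.
have := ltn_ord i; have := ltn_ord j => lt_j lt_ij.
have lt_i : (i < size (dropi j s))%N by rewrite size_dropi //; lia.
by rewrite eqFG // !size_dropi //; lia.
Qed.

Lemma altsum1D s F G :
  altsum1 s (fun a r => F a r + G a r) = altsum1 s F + altsum1 s G.
Proof. by rewrite -big_split; apply: eq_bigr => i _; rewrite scalerDr. Qed.

Lemma altsum2D s F G :
  altsum2 s (fun a b r => F a b r + G a b r) = altsum2 s F + altsum2 s G.
Proof.
rewrite -big_split; apply: eq_bigr => j _; rewrite -big_split.
by apply: eq_bigr => i _; rewrite scalerDr.
Qed.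

Lemma linear_map_altsum1 (h : g -> g) s F : is_linear_map h ->
  h (altsum1 s F) = altsum1 s (fun a r => h (F a r)).
Proof.
move=> h_lin; rewrite linear_map_sum //.
by apply: eq_bigr => i _; rewrite linear_mapZ.
Qed.

Lemma linear_map_altsum2 (h : g -> g) s F : is_linear_map h ->
  h (altsum2 s F) = altsum2 s (fun a b r => h (F a b r)).
Proof.
move=> h_lin; rewrite linear_map_sum //; apply: eq_bigr => j _.
by rewrite linear_map_sum //; apply: eq_bigr => i _; rewrite linear_mapZ.
Qed.

Lemma altsum1N s F : altsum1 s (fun a r => - F a r) = - altsum1 s F.
Proof. by rewrite -sumrN; apply: eq_bigr => i _; rewrite scalerN. Qed.

Lemma altsum2N s F : altsum2 s (fun a b r => - F a b r) = - altsum2 s F.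
Proof.
rewrite -sumrN; apply: eq_bigr => j _; rewrite -sumrN.
by apply: eq_bigr => i _; rewrite scalerN.
Qed.

Lemma altsum2_eq0 s : altsum2 s (fun _ _ _ => 0) = 0.
Proof. by rewrite /altsum2 big1 // => j _; rewrite big1 // => i _; rewrite scaler0. Qed.

Lemma altsum1_map (h : g -> g) s F :
  altsum1 (map h s) F = altsum1 s (fun a r => F (h a) (map h r)).
Proof.
rewrite /altsum1 size_map; apply: eq_bigr => i _.
by rewrite (nth_map 0) // dropi_map.
Qed.

Lemma altsum2_map (h : g -> g) s F :
  altsum2 (map h s) F = altsum2 s (fun a b r => F (h a) (h b) (map h r)).
Proof.
rewrite /altsum2 size_map; apply: eq_bigr => j _; apply: eq_bigr => i _.
have lt_ij := ltn_ord i; have lt_j := ltn_ord j.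
by rewrite !(nth_map 0) ?(ltn_trans lt_ij) // !dropi_map.
Qed.

Lemma altsum1_altsum1 s (H : g -> g -> seq g -> g) :
  altsum1 s (fun a r => altsum1 r (H a)) =
  altsum2 s (fun a b r => H b a r - H a b r).
Proof.
elim: s H => [|x t IH] H; first by rewrite altsum1_nil altsum2_nil.
rewrite altsum1_cons altsum2_cons.
under [X in _ - X = _]eq_altsum1 => a r _ do rewrite altsum1_cons.
by rewrite altsum1D altsum1N IH altsum1D altsum1N !opprB addrA addrAC.
Qed.

Lemma altsum1_altsum2 s (G : g -> g -> g -> seq g -> g) :
  altsum1 s (fun a r => altsum2 r (G a)) =
  altsum2 s (fun a b r => altsum1 r (fun c r' => G c a b r')).
Proof.
elim: s G => [|x t IH] G; first by rewrite altsum1_nil altsum2_nil.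
rewrite altsum1_cons altsum2_cons.
under [X in _ - X = _]eq_altsum1 => a r _ do rewrite altsum2_cons.
under [X in _ = _ + X]eq_altsum2 => a b r _ do rewrite altsum1_cons.
have swap_args : altsum1 t (fun a r => altsum1 r (G a x)) =
                 - altsum1 t (fun a r => altsum1 r (fun b r' => G b x a r')).
  by rewrite !altsum1_altsum1 -altsum2N; apply: eq_altsum2 => a b r _; rewrite opprB.
by rewrite altsum1D altsum1N IH altsum2D altsum2N swap_args opprK opprD addrCA.
Qed.

Lemma altsum2_altsum1_eq0 s (G : g -> g -> g -> seq g -> g) :
  (forall a b c r, (size r).+3 = size s ->
     G a b c r = - G b a c r /\ G a b c r + G b c a r + G c a b r = 0) ->
  altsum2 s (fun a b r => altsum1 r (G a b)) = 0.
Proof.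
elim: s G => [|x t IH] G G_alt; first by rewrite altsum2_nil.
rewrite altsum2_cons.
under eq_altsum2 => a b r _ do rewrite altsum1_cons.
rewrite altsum2D altsum2N IH; last by move=> a b c r sz_r; apply: G_alt => /=; rewrite sz_r.
rewrite altsum1_altsum1 oppr0 addr0 -altsum2N -altsum2D -(altsum2_eq0 t).
apply: eq_altsum2 => a b r sz_r.
have [_ cyclic] := G_alt a b x r ltac:(by rewrite /= -sz_r).
have [anti _] := G_alt b x a r ltac:(by rewrite /= -sz_r).
by move: cyclic; rewrite anti opprB addrC addrA addrAC.
Qed.

Lemma altsum2_altsum2_eq0 s (G : g -> g -> g -> g -> seq g -> g) :
  (forall a b c e r, (size r).+4 = size s -> G a b c e r = - G c e a b r) ->
  altsum2 s (fun a b r => altsum2 r (G a b)) = 0.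
Proof.
elim: s G => [|x t IH] G G_anti; first by rewrite altsum2_nil.
rewrite altsum2_cons.
under eq_altsum2 => a b r _ do rewrite altsum2_cons.
rewrite altsum2D altsum2N IH; last by move=> a b c e r sz_r; apply: G_anti => /=; rewrite sz_r.
rewrite altsum1_altsum2 addr0.
have -> : altsum2 t (fun a b r => altsum1 r (G a b x)) =
          - altsum2 t (fun a b r => altsum1 r (fun e r' => G x e a b r')).
  rewrite -altsum2N; apply: eq_altsum2 => a b r sz_r.
  rewrite -altsum1N; apply: eq_altsum1 => e r' sz_r'.
  by apply: G_anti => /=; rewrite -sz_r -sz_r'.
by rewrite opprK addNr.
Qed.

End AlternatingSums.

Section Multiadditive.
Variables (K : fieldType) (g : lmodType K).
Implicit Types (s p q r : seq g) (h : cochain g).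

Definition multiadditive n h :=
  forall p q x y, (size p + size q).+1 = n ->
  h (p ++ (x + y) :: q) = h (p ++ x :: q) + h (p ++ y :: q).

Lemma alt_multilinear_head n h r :
  is_alt_multilinear n h -> (size r).+1 = n -> is_linear_map (fun x => h (x :: r)).
Proof. by case=> h_lin _ sz_r a x y; apply: (h_lin [::]). Qed.

Lemma alt_multilinear_multiadditive n h :
  is_alt_multilinear n h -> multiadditive n h.
Proof. by case=> h_lin _ p q x y sz; have := h_lin p q 1 x y sz; rewrite !scale1r. Qed.

Lemma alt_multilinear_swap n h a b r :
  is_alt_multilinear n h -> (size r).+2 = n -> h (a :: b :: r) = - h (b :: a :: r).
Proof.
move=> h_alt sz_r; have h_add := alt_multilinear_multiadditive h_alt.
have h_diag x : h (x :: x :: r) = 0 by case: h_alt => _ h0; apply: (h0 [::] [::]).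
have := h_diag (a + b).
rewrite (h_add [::]) ?(h_add [:: a]) ?(h_add [:: b]) //= !h_diag add0r addr0.
by move/eqP; rewrite addr_eq0 => /eqP.
Qed.

Lemma altsum1_multiadditive n F :
  (forall r, size r = n -> {morph F^~ r : a b / a + b}) ->
  (forall a, multiadditive n (F a)) ->
  multiadditive n.+1 (fun s => altsum1 s F).
Proof.
move=> + + p; elim: p n F => [|y p IH] n F F_add F_multi q u v /= sz.
  rewrite !altsum1_cons F_add; last lia.
  rewrite (@eq_altsum1 _ _ _ _ (fun a r => F a (u :: r) + F a (v :: r))).
    by rewrite altsum1D opprD addrACA.
  by move=> a r sz_r; apply: (F_multi a [::]) => /=; lia.
case: n sz F_add F_multi => // n [sz] F_add F_multi.
rewrite !altsum1_cons (F_multi y p q) ?sz //.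
rewrite (IH n (fun a r => F a (y :: r))) ?sz //; first by rewrite opprD addrACA.
  by move=> r sz_r a b; apply: F_add => /=; rewrite sz_r.
by move=> a p' q' x z sz'; apply: (F_multi a (y :: p')) => /=; lia.
Qed.

Lemma altsum2_multiadditive n F :
  (forall b r, size r = n -> {morph (fun a => F a b r) : a a' / a + a'}) ->
  (forall a r, size r = n -> {morph F a ^~ r : b b' / b + b'}) ->
  (forall a b, multiadditive n (F a b)) ->
  multiadditive n.+2 (fun s => altsum2 s F).
Proof.
move=> + + + p; elim: p n F => [|y p IH] n F Fl Fr F_multi q u v /= sz.
  rewrite !altsum2_cons.
  rewrite (@eq_altsum1 _ _ _ (F (u + v)) (fun b r => F u b r + F v b r)); last first.
    by move=> b r sz_r; apply: Fl; lia.
  rewrite (@eq_altsum2 _ _ _ _ (fun a b r => F a b (u :: r) + F a b (v :: r))).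
    by rewrite altsum1D altsum2D opprD addrACA.
  by move=> a b r sz_r; apply: (F_multi a b [::]) => /=; lia.
case: n Fl Fr F_multi sz => [|n] Fl Fr F_multi sz.
  have [-> ->] : p = [::] /\ q = [::] by case: p q sz {IH} => [|? ?] [|? ?] //=; lia.
  rewrite !altsum2_cons !altsum1_cons !altsum1_nil !altsum2_nil /= Fr //.
  by rewrite !oppr0 !addr0 opprD.
have sum1_add := altsum1_multiadditive (Fr y) (F_multi y).
have sum2_add := IH n (fun a b r => F a b (y :: r)).
rewrite !altsum2_cons sum1_add ?(sum2_add _ _ _ q u v) /=; try lia.
- by rewrite opprD addrACA.
- by move=> b r sz_r a a'; apply: Fl => /=; rewrite sz_r.
- by move=> a r sz_r b b'; apply: Fr => /=; rewrite sz_r.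
by move=> a b p' q' x z sz'; apply: (F_multi a b (y :: p')) => /=; lia.
Qed.

End Multiadditive.

Section SubsetExpansion.
Variables (K : fieldType) (g : lmodType K) (D : g -> g).

Definition id_plus (x : g) := x + D x.

Definition set_cons m (b : bool) (S : {set 'I_m}) : {set 'I_m.+1} :=
  [set i | if unlift ord0 i is Some j then j \in S else b].

Lemma sum_set_ordS m (F : {set 'I_m.+1} -> g) :
  \sum_(S : {set 'I_m.+1}) F S =
  \sum_(S : {set 'I_m}) F (set_cons true S) + \sum_(S : {set 'I_m}) F (set_cons false S).
Proof.
rewrite (reindex (fun p : bool * {set 'I_m} => set_cons p.1 p.2)) /=; last first.
  apply: onW_bij.
  exists (fun S : {set 'I_m.+1} => (ord0 \in S, [set j : 'I_m | lift ord0 j \in S])).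
    move=> [b S] /=; congr (_, _); first by rewrite inE unlift_none.
    by apply/setP => j; rewrite !inE liftK.
  move=> S; apply/setP => i; rewrite inE.
  by case: (unliftP ord0 i) => [j ->|->]; rewrite ?inE.
by rewrite -(pair_bigA _ (fun b S => F (set_cons b S))) big_bool.
Qed.

Lemma sum_subsets_multiadditive m (h : cochain g) s :
  size s = m -> multiadditive m h ->
  \sum_(S : {set 'I_m}) h [seq if i \in S then D (nth 0 s i) else nth 0 s i | i <- enum 'I_m]
  = h (map id_plus s).
Proof.
elim: m h s => [|m IH] h [|x s] //= sz_s h_add.
  rewrite (big_pred1 set0) ?enum_ord0 // => S.
  by apply/esym/eqP/setP => -[].
have set_cons_seq b S :
    [seq if i \in set_cons b S then D (nth 0 (x :: s) i) else nth 0 (x :: s) i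
    | i <- enum 'I_m.+1]
  = (if b then D x else x)
    :: [seq if j \in S then D (nth 0 s j) else nth 0 s j | j <- enum 'I_m].
  rewrite enum_ordSl /= -map_comp inE unlift_none; congr (_ :: _).
  by apply: eq_map => j /=; rewrite inE liftK.
rewrite sum_set_ordS; under eq_bigr do rewrite set_cons_seq.
under [X in _ + X]eq_bigr do rewrite set_cons_seq.
have [sz_s' sz_m] : size s = m /\ size (map id_plus s) = m by rewrite size_map; case: sz_s.
rewrite /= (IH (fun r => h (D x :: r))) // ?(IH (fun r => h (x :: r))) //.
- by rewrite addrC -(h_add [::]) //= sz_m.
- by move=> p q y z sz; apply: (h_add (x :: p)) => /=; lia.
by move=> p q y z sz; apply: (h_add (D x :: p)) => /=; lia.
Qed.

Lemma Top_id_plus m (h : cochain g) r :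
  size r = m -> multiadditive m h ->
  Top D m h r = (-1) ^+ m *: (h (map id_plus r) - id_plus (h r)).
Proof.
move=> sz_r h_add; have := sum_subsets_multiadditive sz_r h_add.
rewrite (bigD1 set0) //= => <-.
have -> : [seq if i \in set0 then D (nth 0 r i) else nth 0 r i | i : 'I_m <- enum 'I_m] = r.
  under eq_map do rewrite in_set0.
  by rewrite (map_comp (nth 0 r) val) val_enum_ord -sz_r -/(mkseq _ _) mkseq_nth.
by rewrite /Top /id_plus opprD addrACA subrr add0r.
Qed.

End SubsetExpansion.

Section ChevalleyEilenberg.
Variables (K : fieldType) (g : lmodType K) (br : g -> g -> g).
Implicit Types (rho : g -> g -> g) (f h : cochain g) (s : seq g).

Definition is_representation rho :=
  (forall a, is_linear_map (rho a)) /\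
  (forall a b v, rho (br a b) v = rho a (rho b v) - rho b (rho a v)).

Lemma dCEE rho f s :
  dCE br rho f s =
  altsum1 s (fun a r => rho a (f r)) + altsum2 s (fun a b r => f (br a b :: r)).
Proof. by []. Qed.

Lemma eq_dCE rho f h s :
  (forall r, (size r).+1 = size s -> f r = h r) -> dCE br rho f s = dCE br rho h s.
Proof.
move=> eq_fh; rewrite !dCEE; congr (_ + _).
  by apply: eq_altsum1 => a r sz_r; rewrite eq_fh.
by apply: eq_altsum2 => a b r sz_r; rewrite eq_fh //= sz_r.
Qed.

Lemma dCED rho f h s : (forall a, {morph rho a : x y / x + y}) ->
  dCE br rho (fun r => f r + h r) s = dCE br rho f s + dCE br rho h s.
Proof.
move=> rhoD; rewrite !dCEE -addrACA -altsum1D -altsum2D.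
by congr (_ + _); apply: eq_altsum1 => a r _; rewrite rhoD.
Qed.

Lemma dCEZ rho f c s : (forall a, is_linear_map (rho a)) ->
  dCE br rho (fun r => c *: f r) s = c *: dCE br rho f s.
Proof.
move=> rho_lin; rewrite !dCEE scalerDr.
rewrite !(linear_map_altsum1 _ _ (scale_linear_map c)).
rewrite !(linear_map_altsum2 _ _ (scale_linear_map c)).
by congr (_ + _); apply: eq_altsum1 => a r _; rewrite linear_mapZ.
Qed.

Hypothesis br_lie : is_lie_bracket br.

Lemma lie_linear_l z : is_linear_map (br^~ z).
Proof. by case: br_lie => br_l _ _ _ a x y; apply: br_l. Qed.

Lemma lie_linear_r z : is_linear_map (br z).
Proof. by case: br_lie => _ br_r _ _ a x y; apply: br_r. Qed.

Lemma lie_anti a b : br a b = - br b a.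
Proof.
case: br_lie => _ _ br_xx _; apply/eqP; rewrite -addr_eq0; apply/eqP.
have := br_xx (a + b).
rewrite (linear_mapD (lie_linear_l _)) !(linear_mapD (lie_linear_r _)) !br_xx.
by rewrite add0r addr0.
Qed.

Lemma lie_jacobi a b c : br (br a b) c + br (br b c) a + br (br c a) b = 0.
Proof.
case: br_lie => _ _ _ jacobi.
rewrite (lie_anti (br a b)) (lie_anti (br b c)) (lie_anti (br c a)) -!opprD.
by rewrite -addrA addrC jacobi oppr0.
Qed.

Lemma ad_representation : is_representation (ad br).
Proof.
split=> [a|a b v]; first exact: lie_linear_r.
have := lie_jacobi a b v; rewrite /ad (lie_anti (br b v)) (lie_anti (br v a)).
rewrite (lie_anti v a) (linear_mapN (lie_linear_r _)) opprK.
by move=> /eqP; rewrite addrAC subr_eq0 => /eqP <-; rewrite addrK.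
Qed.

(* Expanding [d (d f)] gives six double sums: the two made of [rho] alone cancel
   by the representation property, the two mixed ones cancel each other, the
   one with [br (br a b) c] vanishes by Jacobi and the one with two brackets
   vanishes by antisymmetry of [f]. *)
Lemma dCE_dCE rho m f s :
  is_representation rho -> is_alt_multilinear m f -> size s = m.+2 ->
  dCE br rho (dCE br rho f) s = 0.
Proof.
move=> [rho_lin rho_br] f_alt sz_s.
have f_head r : (size r).+1 = m -> is_linear_map (fun x => f (x :: r)).
  exact: alt_multilinear_head.
have rho_rho : altsum1 s (fun a r => rho a (dCE br rho f r)) =
    altsum1 s (fun a r => altsum1 r (fun b r' => rho a (rho b (f r')))) +
    altsum1 s (fun a r => altsum2 r (fun b c r' => rho a (f (br b c :: r')))).
  rewrite -altsum1D; apply: eq_altsum1 => a r _.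
  rewrite dCEE (linear_mapD (rho_lin a)) (linear_map_altsum1 _ _ (rho_lin a)).
  by rewrite (linear_map_altsum2 _ _ (rho_lin a)).
have rho_br_sum : altsum2 s (fun a b r => dCE br rho f (br a b :: r)) =
    altsum2 s (fun a b r => rho (br a b) (f r))
    - altsum2 s (fun a b r => altsum1 r (fun c r' => rho c (f (br a b :: r'))))
    - altsum2 s (fun a b r => altsum1 r (fun c r' => f (br (br a b) c :: r')))
    + altsum2 s (fun a b r => altsum2 r (fun c e r' => f (br c e :: br a b :: r'))).
  rewrite -!altsum2N -!altsum2D; apply: eq_altsum2 => a b r _.
  by rewrite dCEE altsum1_cons altsum2_cons !addrA.
have jacobi_sum :
    altsum2 s (fun a b r => altsum1 r (fun c r' => f (br (br a b) c :: r'))) = 0.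
  apply: altsum2_altsum1_eq0 => a b c r sz_r.
  have f_lin : is_linear_map (fun x => f (x :: r)) by apply: f_head; lia.
  split.
    by rewrite (lie_anti b a) (linear_mapN (lie_linear_l _)) (linear_mapN f_lin) opprK.
  by rewrite -!(linear_mapD f_lin) lie_jacobi (linear_map0 f_lin).
have bracket2_sum :
    altsum2 s (fun a b r => altsum2 r (fun c e r' => f (br c e :: br a b :: r'))) = 0.
  apply: altsum2_altsum2_eq0 => a b c e r sz_r.
  by apply: (alt_multilinear_swap _ _ f_alt); lia.
rewrite dCEE rho_rho rho_br_sum jacobi_sum bracket2_sum altsum1_altsum1 altsum1_altsum2.
rewrite subr0 addr0 addrACA subrr addr0 -altsum2D -[RHS](altsum2_eq0 s).
by apply: eq_altsum2 => a b r _; rewrite rho_br -opprB addNr.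
Qed.

Lemma dCE_ad_multiadditive n f :
  multiadditive n.+1 f -> multiadditive n.+2 (dCE br (ad br) f).
Proof.
move=> f_add p q x y sz; rewrite !dCEE.
rewrite (altsum1_multiadditive (n := n.+1)) //; last first.
- move=> a p' q' u v sz'; rewrite f_add //; exact: (linear_mapD (lie_linear_r _)).
- by move=> r _ a b; exact: (linear_mapD (lie_linear_l _)).
rewrite (altsum2_multiadditive (n := n)) //; first by rewrite addrACA.
- by move=> b r sz_r a a'; rewrite (linear_mapD (lie_linear_l _)) (f_add [::]) //= sz_r.
- by move=> a r sz_r b b'; rewrite (linear_mapD (lie_linear_r _)) (f_add [::]) //= sz_r.
by move=> a b p' q' u v sz'; apply: (f_add (br a b :: p')) => /=; lia.
Qed.

End ChevalleyEilenberg.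

Section DifferenceLie.
Variables (K : fieldType) (g : lmodType K) (br : g -> g -> g) (D : g -> g).
Hypothesis brD : is_difference_lie br D.

Let br_lie : is_lie_bracket br. Proof. by case: brD. Qed.
Let D_lin : is_linear_map D. Proof. by case: brD. Qed.

Lemma id_plus_linear : is_linear_map (id_plus D).
Proof. by move=> c x y; rewrite /id_plus D_lin scalerDr addrACA. Qed.

Lemma id_plus_bracket a b : id_plus D (br a b) = br (id_plus D a) (id_plus D b).
Proof.
case: brD => _ _ D_br; rewrite /id_plus D_br.
rewrite (linear_mapD (lie_linear_l br_lie _)) !(linear_mapD (lie_linear_r br_lie _)).
by rewrite (lie_anti br_lie (D a) b) !addrA [br a b + br a (D b) - _]addrC.
Qed.

Lemma adD_id_plus a u : adD br D a u = ad br (id_plus D a) u.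
Proof. by rewrite /adD /ad /id_plus (linear_mapD (lie_linear_l br_lie _)). Qed.

Lemma adD_representation : is_representation br (adD br D).
Proof.
have [ad_lin ad_br] := ad_representation br_lie.
split=> [a c x y|a b v]; rewrite !adD_id_plus; first exact: ad_lin.
by rewrite id_plus_bracket ad_br.
Qed.

Lemma adD_id_plus_r a v : adD br D a (id_plus D v) = id_plus D (br a v).
Proof. by rewrite adD_id_plus id_plus_bracket. Qed.

Lemma dCE_adD_comp_id_plus (f : cochain g) s :
  dCE br (adD br D) (fun r => f (map (id_plus D) r)) s =
  dCE br (ad br) f (map (id_plus D) s).
Proof.
rewrite !dCEE altsum1_map altsum2_map; congr (_ + _).
  by apply: eq_altsum1 => a r _; rewrite adD_id_plus.
by apply: eq_altsum2 => a b r _ /=; rewrite id_plus_bracket.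
Qed.

Lemma dCE_adD_id_plus_comp (f : cochain g) s :
  dCE br (adD br D) (fun r => id_plus D (f r)) s = id_plus D (dCE br (ad br) f s).
Proof.
rewrite !dCEE (linear_mapD id_plus_linear).
rewrite (linear_map_altsum1 _ _ id_plus_linear) (linear_map_altsum2 _ _ id_plus_linear).
by congr (_ + _); apply: eq_altsum1 => a r _; rewrite adD_id_plus_r.
Qed.

Lemma dCE_adD_Top n (f : cochain g) s :
  multiadditive n.+1 f -> size s = n.+2 ->
  dCE br (adD br D) (Top D n.+1 f) s + Top D n.+2 (dCE br (ad br) f) s = 0.
Proof.
move=> f_add sz_s; have [adD_lin _] := adD_representation.
rewrite (@eq_dCE _ _ _ _ _ (fun r => (-1) ^+ n.+1 *:
            (f (map (id_plus D) r) + (-1) *: id_plus D (f r)))); last first.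
  by move=> r sz_r; rewrite Top_id_plus ?scaleN1r //; case: sz_r; rewrite sz_s => -[].
rewrite dCEZ // dCED => [|a]; last exact: linear_mapD (adD_lin a).
rewrite dCEZ // dCE_adD_comp_id_plus dCE_adD_id_plus_comp scaleN1r.
rewrite (Top_id_plus D sz_s (dCE_ad_multiadditive br_lie f_add)).
by rewrite !exprS !mulN1r opprK scaleNr addNr.
Qed.

End DifferenceLie.

Theorem theorem4p1 (K : fieldType) (g : lmodType K) (br : g -> g -> g) (D : g -> g) :
  is_difference_lie br D ->
  (forall f : cochain g, is_alt_multilinear 1 f ->
     let q := dbar br D 2 (dbar1 br D f) in
     (forall s : seq g, size s = 3%N -> q.1 s = 0) /\
     (forall s : seq g, size s = 2%N -> q.2 s = 0)) /\
  (forall (n : nat) (f theta : cochain g), (2 <= n)%N ->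
     is_alt_multilinear n f -> is_alt_multilinear n.-1 theta ->
     let q := dbar br D n.+1 (dbar br D n (f, theta)) in
     (forall s : seq g, size s = n.+2 -> q.1 s = 0) /\
     (forall s : seq g, size s = n.+1 -> q.2 s = 0)).
Proof.
move=> brD; have br_lie : is_lie_bracket br by case: brD.
have ad_rep := ad_representation br_lie; have [adD_lin _] := adD_representation brD.
split=> [f f_alt | [|[|n]] // f theta _ f_alt theta_alt] /=; split=> s sz_s.
- exact: (dCE_dCE br_lie ad_rep f_alt sz_s).
- exact: (dCE_adD_Top brD (alt_multilinear_multiadditive f_alt) sz_s).
- exact: (dCE_dCE br_lie ad_rep f_alt sz_s).
rewrite /cadd dCED => [|a]; last exact: linear_mapD.
rewrite (dCE_dCE br_lie (adD_representation brD) theta_alt) ?add0r //.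
exact: (dCE_adD_Top brD (alt_multilinear_multiadditive f_alt) sz_s).
Qed.
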